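(* Let $\mathbf h,\mathbf g\in\mathbb C^{N}$ be nonzero, $P_t>0$, $\eta>0$, and consider $$\max_{\mathbf f\in\mathbb C^N}\ |\mathbf h^{H}\mathbf f|^2\quad\text{s.t.}\quad \|\mathbf f\|^2\le P_t,\quad |\mathbf g^{H}\mathbf f|^2\ge\eta .$$ An optimal solution has the form $\mathbf f=a\mathbf h+b\mathbf g$ with $a,b\in\mathbb C$, where: Case 1: if $\eta\le \dfrac{P_t|\mathbf g^{H}\mathbf h|^2}{\|\mathbf h\|^2}$, then $|a|=\dfrac{\sqrt{P_t}}{\|\mathbf h\|}$, $b=0$, with the phase of $a$ arbitrary. Case 2: if $\dfrac{P_t|\mathbf g^{H}\mathbf h|^2}{\|\mathbf h\|^2}\le\eta\le P_t\|\mathbf g\|^2$ (and $\mathbf h,\mathbf g$ are linearly independent), then $$|a|=\sqrt{\frac{P_t\|\mathbf g\|^2-\eta}{\|\mathbf h\|^2\|\mathbf g\|^2-|\mathbf h^{H}\mathbf g|^2}},\qquad |b|=\frac{\sqrt\eta}{\|\mathbf g\|^2}-\frac{|\mathbf h^{H}\mathbf g|}{\|\mathbf g\|^2}|a|,$$ with phases satisfying $\angle(a)-\angle(b)=\angle(\mathbf h^{H}\mathbf g)$. Case 3: if $\eta>P_t\|\mathbf g\|^2$, the problem is infeasible. *)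

From HB Require Import structures.
From mathcomp Require Import all_boot all_order all_algebra.
From mathcomp Require Import complex.
From mathcomp Require Import reals.
Set Implicit Arguments. Unset Strict Implicit. Unset Printing Implicit Defensive.
Import Order.TTheory GRing.Theory Num.Theory.
Local Open Scope ring_scope.

Section Defs.
Variable C : numClosedFieldType.
Variable N : nat.

Definition dotc (u v : 'cV[C]_N) : C := \sum_(i < N) (u i 0)^* * v i 0.

Definition norm2 (v : 'cV[C]_N) : C := dotc v v.

Definition vnorm (v : 'cV[C]_N) : C := sqrtC (norm2 v).

Definition feasible (g : 'cV[C]_N) (Pt eta : C) (f : 'cV[C]_N) : Prop :=
  norm2 f <= Pt /\ eta <= `|dotc g f| ^+ 2.

Definition optimal (h g : 'cV[C]_N) (Pt eta : C) (f : 'cV[C]_N) : Prop :=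
  feasible g Pt eta f /\
  forall f' : 'cV[C]_N, feasible g Pt eta f' -> `|dotc h f'| ^+ 2 <= `|dotc h f| ^+ 2.

Definition lin_indep2 (h g : 'cV[C]_N) : Prop :=
  forall a b : C, a *: h + b *: g = 0 -> a = 0 /\ b = 0.
End Defs.

(* u is a phase (unit-modulus factor) of z: z = |z| u, |u| = 1.
   For z = 0 every unit u is a phase (angle arbitrary). *)
Definition is_phase (C : numClosedFieldType) (z u : C) : Prop :=
  `|u| = 1 /\ z = `|z| * u.

Definition angle_diff_eq (C : numClosedFieldType) (a b c : C) : Prop :=
  exists ua ub uc : C,
    [/\ is_phase a ua, is_phase b ub, is_phase c uc & ua / ub = uc].

(* Write H = |h|^2, G = |g|^2, c = |h^H g|, K = H G - c^2, p = |h^H f| and q = |g^H f|.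
   Nonnegativity of the Gram determinant of h, g, f gives (G p - c q)^2 <= K (G |f|^2 - q^2),
   so a feasible f satisfies (G p - c q)^2 <= K (G P_t - q^2) with q >= sqrt eta. This is an
   arc of a disc in the (q, p)-plane on which p is largest at q = sqrt eta, and that bound is
   attained by a h + b g, whose aligned phases make all cross terms real and nonnegative.
   Cases 1 and 3 are Cauchy-Schwarz. *)
From HB Require Import structures.
From mathcomp Require Import all_boot all_order all_algebra.
From mathcomp Require Import complex.
From mathcomp Require Import reals.
From mathcomp Require Import ring.
Set Implicit Arguments.
Unset Strict Implicit.
Unset Printing Implicit Defensive.
Import Order.TTheory GRing.Theory Num.Theory.
Local Open Scope ring_scope.

(* With R^2 = A^2 K + s^2 the hypothesis puts (q, (z - c q) / sqrt K) in the disc of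
   radius R; on its part q >= s the linear form c q + sqrt K y is maximal at the boundary
   point (s, A sqrt K), because c A <= s puts the unconstrained maximiser at q <= s. *)
Lemma linear_bound_on_disc_arc (R : numDomainType) (K c A s q z : R) :
  0 < K -> 0 <= c -> 0 <= A -> c * A <= s -> s <= q -> 0 <= z ->
  (z - c * q) ^+ 2 <= K * (A ^+ 2 * K + s ^+ 2 - q ^+ 2) ->
  z <= A * K + c * s.
Proof.
move=> K_gt0 c_ge0 A_ge0 cA_le_s s_le_q z_ge0 hz.
have s_ge0 : 0 <= s := le_trans (mulr_ge0 c_ge0 A_ge0) cA_le_s.
have sA_ge0 : 0 <= s - c * A by rewrite subr_ge0.
have x_ge0 : 0 <= q - s by rewrite subr_ge0.
move: (q - s) x_ge0 (subrK s q) hz => x x_ge0 <- {s_le_q} hz.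
have real_z : z - c * (x + s) \is Num.real.
  by rewrite rpredB ?ger0_real ?mulr_ge0 ?addr_ge0.
set D := A ^+ 2 * K + s ^+ 2 - (x + s) ^+ 2 in hz.
have D_ge0 : 0 <= D by rewrite -(pmulr_rge0 _ K_gt0) (le_trans _ hz) -?realEsqr.
set t := A * K - c * x.
have At_ge : x ^+ 2 <= A * t.
  have -> : A * t = x ^+ 2 + (D + x * s + x * (s - c * A)).
    by rewrite /t /D; ring.
  by rewrite lerDl addr_ge0 ?mulr_ge0 // addr_ge0 // mulr_ge0.
have t_ge0 : 0 <= t.
  have x2_ge0 : 0 <= x ^+ 2 by rewrite -realEsqr ger0_real.
  have [A0|A_gt0] : A = 0 \/ 0 < A by move: A_ge0; rewrite le0r => /orP[/eqP|]; [left|right].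
  - move: At_ge; rewrite A0 mul0r => x2_le0.
    have x0 : x = 0 by apply/eqP; rewrite -sqrf_eq0 eq_le x2_le0.
    by rewrite /t x0 A0 !(mul0r, mulr0) subr0.
  - by rewrite -(pmulr_rge0 _ A_gt0) (le_trans x2_ge0).
have gap : t ^+ 2 = K * D + x * ((c ^+ 2 + K) * x + 2 * K * (s - c * A)).
  by rewrite /t /D; ring.
have norm_le_t : `|z - c * (x + s)| <= t.
  rewrite -(ler_pXn2r (_ : 0 < 2)%N) ?nnegrE ?normr_ge0 // real_normK // gap.
  have c2K_ge0 : 0 <= c ^+ 2 + K by rewrite addr_ge0 ?(ltW K_gt0) // -realEsqr ger0_real.
  apply: le_trans hz _.
  by rewrite lerDl mulr_ge0 // addr_ge0 ?mulr_ge0 // ltW.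
have -> : A * K + c * s = t + c * (x + s) by rewrite /t; ring.
by rewrite -lerBlDr (le_trans (real_ler_norm real_z)).
Qed.

Lemma conjC_norm1 (C : numClosedFieldType) (u : C) : `|u| = 1 -> u^* = u^-1.
Proof. by move=> u1; rewrite invC_norm u1 expr1n invr1 mul1r. Qed.

Section InnerProduct.
Variables (C : numClosedFieldType) (N : nat).
Implicit Types (u v w : 'cV[C]_N) (a : C).

Lemma dotcDl u v w : dotc (u + v) w = dotc u w + dotc v w.
Proof. by rewrite /dotc -big_split; apply: eq_bigr => i _; rewrite mxE rmorphD mulrDl. Qed.

Lemma dotcDr u v w : dotc u (v + w) = dotc u v + dotc u w.
Proof. by rewrite /dotc -big_split; apply: eq_bigr => i _; rewrite mxE mulrDr. Qed.

Lemma dotcZl a u v : dotc (a *: u) v = a^* * dotc u v.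
Proof. by rewrite /dotc mulr_sumr; apply: eq_bigr => i _; rewrite mxE rmorphM mulrA. Qed.

Lemma dotcZr a u v : dotc u (a *: v) = a * dotc u v.
Proof. by rewrite /dotc mulr_sumr; apply: eq_bigr => i _; rewrite mxE mulrCA. Qed.

Lemma dotcC u v : dotc v u = (dotc u v)^*.
Proof.
by rewrite /dotc rmorph_sum; apply: eq_bigr => i _; rewrite rmorphM /= conjCK mulrC.
Qed.

Lemma dotc0l v : dotc 0 v = 0.
Proof. by rewrite -(scale0r 0) dotcZl rmorph0 mul0r. Qed.

Lemma conj_norm2 u : (norm2 u)^* = norm2 u.
Proof. by rewrite -dotcC. Qed.

Lemma norm2_ge0 u : 0 <= norm2 u.
Proof. by apply: sumr_ge0 => i _; rewrite mulrC -normCK exprn_ge0. Qed.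

Lemma norm2_eq0 u : (norm2 u == 0) = (u == 0).
Proof.
apply/idP/eqP => [|->]; last by rewrite /norm2 dotc0l.
rewrite /norm2 /dotc psumr_eq0 => [/allP u0|i _]; last by rewrite mulrC -normCK exprn_ge0.
apply/matrixP => i j; rewrite (ord1 j) mxE.
by have := u0 i (mem_index_enum _); rewrite mulf_eq0 conjC_eq0 orbb => /eqP.
Qed.

Lemma norm2_gt0 u : u != 0 -> 0 < norm2 u.
Proof. by rewrite lt_def norm2_eq0 norm2_ge0 andbT. Qed.

Lemma norm2_schwarz_residual u v :
  norm2 (norm2 u *: v - dotc u v *: u) =
  norm2 u * (norm2 u * norm2 v - `|dotc u v| ^+ 2).
Proof.
rewrite -scaleNr /norm2 !(dotcDl, dotcDr, dotcZl, dotcZr) (dotcC u v) normCK.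
by rewrite rmorphN /= conj_norm2 /norm2; ring.
Qed.

Lemma cauchy_schwarz u v : `|dotc u v| ^+ 2 <= norm2 u * norm2 v.
Proof.
have [->|u_neq0] := eqVneq u 0; first by rewrite dotc0l normr0 expr0n /norm2 dotc0l mul0r.
have := norm2_ge0 (norm2 u *: v - dotc u v *: u).
by rewrite norm2_schwarz_residual pmulr_rge0 ?norm2_gt0 // subr_ge0.
Qed.

Lemma lin_indep2_neq0 u v : lin_indep2 u v -> u != 0 /\ v != 0.
Proof.
move=> indep_uv; split; apply/eqP => uv0.
  by have [|/eqP] := indep_uv 1 0; rewrite ?oner_eq0 // uv0 scaler0 scale0r addr0.
by have [|_ /eqP] := indep_uv 0 1; rewrite ?oner_eq0 // uv0 scaler0 scale0r add0r.
Qed.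

Lemma cauchy_schwarz_lt u v :
  lin_indep2 u v -> `|dotc u v| ^+ 2 < norm2 u * norm2 v.
Proof.
move=> indep_uv; rewrite lt_neqAle cauchy_schwarz andbT.
have [u_neq0 _] := lin_indep2_neq0 indep_uv.
apply/eqP => eq_cs; have /eqP := norm2_schwarz_residual u v.
rewrite eq_cs subrr mulr0 norm2_eq0 addrC -scaleNr => /eqP /indep_uv [_ /eqP].
by rewrite norm2_eq0 (negPf u_neq0).
Qed.

Section Gram.
Variables h g f : 'cV[C]_N.
Let H := norm2 h.
Let G := norm2 g.
Let c := dotc h g.
Let p := dotc h f.
Let q := dotc g f.
Let K := H * G - `|c| ^+ 2.

(* The Gram determinant of h, g, f, as K times the squared norm of the part of K f
   orthogonal to h and g. *)
Lemma norm2_gram_residual :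
  norm2 (K *: f - (G * p - c * q) *: h - (H * q - c^* * p) *: g) =
  K * (K * norm2 f - G * `|p| ^+ 2 - H * `|q| ^+ 2 + (c * p^* * q + (c * p^* * q)^*)).
Proof.
rewrite -!scaleNr /norm2 !(dotcDl, dotcDr, dotcZl, dotcZr) (dotcC h f) (dotcC g f) (dotcC h g).
rewrite /K /H /G !normCK !(rmorphN, rmorphB, rmorphM, rmorphD) /= !conj_norm2 !conjCK.
by rewrite /norm2 -/c -/p -/q; ring.
Qed.

Lemma gram_ineq : 0 < K -> (G * `|p| - `|c| * `|q|) ^+ 2 <= K * (G * norm2 f - `|q| ^+ 2).
Proof.
move=> K_gt0.
have cross_le : c * p^* * q + (c * p^* * q)^* <= 2 * (`|c| * `|p| * `|q|).
  have [Re_le _] := leif_Re_Creal (c * p^* * q).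
  by move: Re_le; rewrite ReE !normrM norm_conjC ler_pdivrMr ?ltr0n // [_ * 2]mulrC.
have gram_ge0 := norm2_ge0 (K *: f - (G * p - c * q) *: h - (H * q - c^* * p) *: g).
rewrite norm2_gram_residual pmulr_rge0 // in gram_ge0.
rewrite -subr_ge0 (_ : _ - _ =
    G * (K * norm2 f - G * `|p| ^+ 2 - H * `|q| ^+ 2 + 2 * (`|c| * `|p| * `|q|))).
  by rewrite mulr_ge0 ?norm2_ge0 // (le_trans gram_ge0) // lerD2l.
by rewrite /K; ring.
Qed.
End Gram.

Section PhaseAlignedCombination.
Variables (h g : 'cV[C]_N) (a b : C).
Hypothesis phase_ab : angle_diff_eq a b (dotc h g).
Let c := dotc h g.
Let f := a *: h + b *: g.

Lemma aligned_phases : exists ub uc : C,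
  [/\ `|ub| = 1, `|uc| = 1, a = `|a| * (uc * ub), b = `|b| * ub & c = `|c| * uc].
Proof.
have [ua [ub [uc [[_ a_eq] [ub1 b_eq] [uc1 c_eq] ua_eq]]]] := phase_ab.
exists ub, uc; split=> //; rewrite -ua_eq divfK //.
by rewrite -normr_eq0 ub1 oner_eq0.
Qed.

Lemma norm_dotc_aligned_l : `|dotc h f| = `|a| * norm2 h + `|b| * `|c|.
Proof.
have [ub [uc [ub1 uc1 a_eq b_eq c_eq]]] := aligned_phases.
have -> : dotc h f = uc * ub * (`|a| * norm2 h + `|b| * `|c|).
  rewrite /f dotcDr !dotcZr -/c; move: a_eq b_eq c_eq.
  by set A := `|a|; set B := `|b|; set cm := `|c|; move=> -> -> ->; rewrite /norm2; ring.
by rewrite !normrM ub1 uc1 !mul1r ger0_norm // addr_ge0 ?mulr_ge0 ?norm2_ge0.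
Qed.

Lemma norm_dotc_aligned_r : `|dotc g f| = `|a| * `|c| + `|b| * norm2 g.
Proof.
have [ub [uc [ub1 uc1 a_eq b_eq c_eq]]] := aligned_phases.
have uc0 : uc != 0 by rewrite -normr_eq0 uc1 oner_eq0.
have -> : dotc g f = ub * (`|a| * `|c| + `|b| * norm2 g).
  rewrite /f dotcDr !dotcZr (dotcC h g) -/c; move: a_eq b_eq c_eq.
  set A := `|a|; set B := `|b|; set cm := `|c|; move=> -> -> ->.
  by rewrite rmorphM /= conj_normC conjC_norm1 // /norm2 -/cm; field.
by rewrite normrM ub1 mul1r ger0_norm // addr_ge0 ?mulr_ge0 ?norm2_ge0.
Qed.

Lemma norm2_aligned :
  norm2 f = `|a| ^+ 2 * norm2 h + 2 * (`|a| * `|b| * `|c|) + `|b| ^+ 2 * norm2 g.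
Proof.
have [ub [uc [ub1 uc1 a_eq b_eq c_eq]]] := aligned_phases.
have ub0 : ub != 0 by rewrite -normr_eq0 ub1 oner_eq0.
have uc0 : uc != 0 by rewrite -normr_eq0 uc1 oner_eq0.
rewrite /norm2 /f !(dotcDl, dotcDr, dotcZl, dotcZr) (dotcC h g) -/c; move: a_eq b_eq c_eq.
have:= conj_normC a; have := conj_normC b; have := conj_normC c.
set A := `|a|; set B := `|b|; set cm := `|c|; move=> cm_real B_real A_real -> -> ->.
by rewrite !rmorphM /= A_real B_real cm_real !conjC_norm1 // /norm2; field; rewrite uc0 ub0.
Qed.
End PhaseAlignedCombination.

Lemma optimal_scaled_h (h g : 'cV[C]_N) (Pt eta a : C) :
  h != 0 -> eta <= Pt * `|dotc g h| ^+ 2 / norm2 h -> `|a| = sqrtC Pt / vnorm h ->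
  optimal h g Pt eta (a *: h + 0 *: g).
Proof.
move=> h_neq0 eta_le a_eq; rewrite scale0r addr0.
have H_gt0 := norm2_gt0 h_neq0.
have a2 : `|a| ^+ 2 = Pt / norm2 h by rewrite a_eq expr_div_n /vnorm !sqrtCK.
have norm2_ah : norm2 (a *: h) = Pt.
  by rewrite /norm2 dotcZl dotcZr mulrA -normCKC a2 divfK ?gt_eqF.
split; first split.
- by rewrite norm2_ah.
- by rewrite dotcZr normrM exprMn a2 mulrAC.
- move=> f [F_le _]; rewrite dotcZr normrM exprMn a2 ger0_norm ?norm2_ge0 //.
  rewrite expr2 mulrA divfK ?gt_eqF // mulrC.
  by rewrite (le_trans (cauchy_schwarz h f)) // [Pt * _]mulrC ler_pM2l.
Qed.

Lemma not_feasible_of_lt (g f : 'cV[C]_N) (Pt eta : C) :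
  Pt * norm2 g < eta -> ~ feasible g Pt eta f.
Proof.
move=> eta_gt [F_le eta_le].
have eta_le_PtG : eta <= Pt * norm2 g.
  apply: le_trans eta_le (le_trans (cauchy_schwarz g f) _).
  by rewrite mulrC ler_wpM2r ?norm2_ge0.
by rewrite (lt_geF eta_gt) in eta_le_PtG.
Qed.

Section PhaseAlignedOptimum.
Variables (h g : 'cV[C]_N) (Pt eta : C).
Let H := norm2 h.
Let G := norm2 g.
Let cm : C := `|dotc h g|.
Let K := H * G - cm ^+ 2.

Lemma norm_dotc_le_of_feasible (A B : C) (f : 'cV[C]_N) :
  0 < G -> 0 < K -> 0 <= A -> 0 <= B ->
  A ^+ 2 * K = Pt * G - eta -> B * G = sqrtC eta - cm * A ->
  feasible g Pt eta f -> `|dotc h f| <= A * H + B * cm.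
Proof.
move=> G_gt0 K_gt0 A_ge0 B_ge0 A2K BG [F_le eta_le].
have G_ge0 := ltW G_gt0; have cm_ge0 : 0 <= cm := normr_ge0 _.
set s := sqrtC eta in BG.
have s_eq : s = B * G + cm * A by rewrite BG subrK.
have cmA_le_s : cm * A <= s by rewrite s_eq lerDr mulr_ge0.
have s_ge0 : 0 <= s by rewrite s_eq addr_ge0 ?mulr_ge0.
have s_le_q : s <= `|dotc g f|.
  by rewrite -(ler_pXn2r (_ : 0 < 2)%N) ?nnegrE ?normr_ge0 // /s sqrtCK.
have gram := gram_ineq f K_gt0.
rewrite -/H -/G -/cm -/K in gram.
rewrite -(ler_pM2l G_gt0) (_ : G * (A * H + B * cm) = A * K + cm * s); last first.
  by rewrite s_eq /K; ring.
apply: (linear_bound_on_disc_arc K_gt0 cm_ge0 A_ge0 cmA_le_s s_le_q).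
  by rewrite mulr_ge0 ?normr_ge0.
apply: le_trans gram _; rewrite ler_pM2l // lerD2r.
by rewrite /s sqrtCK A2K subrK [Pt * G]mulrC ler_pM2l.
Qed.

Lemma optimal_phase_aligned (a b : C) :
  lin_indep2 h g ->
  `|a| = sqrtC ((Pt * G - eta) / (H * G - cm ^+ 2)) ->
  `|b| = sqrtC eta / G - cm / G * `|a| ->
  angle_diff_eq a b (dotc h g) ->
  optimal h g Pt eta (a *: h + b *: g).
Proof.
move=> indep_hg a_eq b_eq phase_ab.
have [_ g_neq0] := lin_indep2_neq0 indep_hg.
have G_gt0 : 0 < G := norm2_gt0 g_neq0.
have K_gt0 : 0 < K by rewrite subr_gt0 cauchy_schwarz_lt.
have A2K : `|a| ^+ 2 * K = Pt * G - eta by rewrite a_eq sqrtCK divfK ?gt_eqF.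
have BG : `|b| * G = sqrtC eta - cm * `|a| by rewrite b_eq; field; rewrite gt_eqF.
have s_eq : `|a| * cm + `|b| * G = sqrtC eta by rewrite BG; ring.
have norm_dotc_g : `|dotc g (a *: h + b *: g)| = sqrtC eta.
  by rewrite (norm_dotc_aligned_r phase_ab).
have norm2_f : norm2 (a *: h + b *: g) = Pt.
  apply: (mulfI (lt0r_neq0 G_gt0)); rewrite (norm2_aligned phase_ab) -/H -/G -/cm.
  rewrite (_ : G * _ = `|a| ^+ 2 * K + (`|a| * cm + `|b| * G) ^+ 2); last by rewrite /K; ring.
  by rewrite A2K s_eq sqrtCK mulrC subrK.
split; first split.
- by rewrite norm2_f.
- by rewrite norm_dotc_g sqrtCK.
- move=> f feas_f; rewrite (norm_dotc_aligned_l phase_ab) -/H -/cm.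
  rewrite ler_pXn2r ?nnegrE ?normr_ge0 ?addr_ge0 ?mulr_ge0 ?normr_ge0 ?norm2_ge0 //.
  exact: norm_dotc_le_of_feasible.
Qed.
End PhaseAlignedOptimum.
End InnerProduct.

Local Open Scope complex_scope.

Theorem proposition2 (R : realType) (N : nat) (h g : 'cV[R[i]]_N) (Pt eta : R[i])
  (hh : h != 0) (hg : g != 0) (hPt : 0 < Pt) (heta : 0 < eta) :
  let H := norm2 h in
  let G := norm2 g in
  (* Case 1 *)
  (eta <= Pt * `|dotc g h| ^+ 2 / H ->
     forall a : R[i], `|a| = sqrtC Pt / vnorm h ->
       optimal h g Pt eta (a *: h + 0 *: g)) /\
  (* Case 2 *)
  (Pt * `|dotc g h| ^+ 2 / H <= eta -> eta <= Pt * G -> lin_indep2 h g ->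
     forall a b : R[i],
       `|a| = sqrtC ((Pt * G - eta) / (H * G - `|dotc h g| ^+ 2)) ->
       `|b| = sqrtC eta / G - `|dotc h g| / G * `|a| ->
       angle_diff_eq a b (dotc h g) ->
       optimal h g Pt eta (a *: h + b *: g)) /\
  (* Case 3 *)
  (Pt * G < eta -> forall f : 'cV[R[i]]_N, ~ feasible g Pt eta f).
Proof.
move=> H G; split; [|split].
- by move=> eta_le a; apply: optimal_scaled_h.
- (* The range of eta is implied: |a| and |b| are real and nonnegative. *)
  by move=> _ _ indep_hg a b; apply: optimal_phase_aligned.
- by move=> eta_gt f; apply: not_feasible_of_lt.
Qed.
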